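(* Let $A_1,A_2,B_1,B_2\in\mathcal{M}_n$ be such that $A_1\otimes A_2$ and $B_1\otimes B_2$ belong to the balls of diameter $[m_1I_{n^2},M_1I_{n^2}]$ and $[m_2I_{n^2},M_2I_{n^2}]$ respectively, for some $m_1,M_1,m_2,M_2\in\mathbb C$. Then $$\left|(A_1B_1)\circ(A_2B_2)-(A_1\circ A_2)(B_1\circ B_2)\right|\le\tfrac14|M_1-m_1|\,|M_2-m_2|\,I_n .$$
   Context: $X\otimes Y$ is the Kronecker (tensor) product and $X\circ Y$ the Hadamard (entrywise) product; $|X|=(X^*X)^{1/2}$. $A$ lies in the ball of diameter $[mI,MI]$ iff $\|A-\frac{M+m}{2}I\|\le\frac{|M-m|}{2}$ (operator norm). *)

(* Complex matrices over an arbitrary numClosedFieldType C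
   (e.g. the complex numbers); `|z| is the modulus, z^* the conjugate. *)
From HB Require Import structures.
From mathcomp Require Import all_boot all_order all_algebra all_fingroup all_character.
Set Implicit Arguments. Unset Strict Implicit. Unset Printing Implicit Defensive.
Import Order.TTheory GRing.Theory Num.Theory.
Local Open Scope ring_scope.

Definition adjmx (C : numClosedFieldType) m n (X : 'M[C]_(m, n)) : 'M[C]_(n, m) :=
  (map_mx Num.conj X)^T.

Definition kron (C : numClosedFieldType) m1 n1 m2 n2
  (A : 'M[C]_(m1, n1)) (B : 'M[C]_(m2, n2)) : 'M[C]_(m1 * m2, n1 * n2) :=
  tprod A B.

Definition hadamard (C : numClosedFieldType) m n (A B : 'M[C]_(m, n)) : 'M[C]_(m, n) :=
  \matrix_(i, j) (A i j * B i j).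

Definition vnorm (C : numClosedFieldType) n (x : 'cV[C]_n) : C :=
  sqrtC (\sum_(i < n) `|x i 0| ^+ 2).

Definition opnorm_le (C : numClosedFieldType) n (T : 'M[C]_n) (r : C) : Prop :=
  forall x : 'cV[C]_n, vnorm (T *m x) <= r * vnorm x.

(* A lies in the ball of diameter [mI, MI]:  ||A - (M+m)/2 I|| <= |M-m|/2 *)
Definition in_ball (C : numClosedFieldType) n (A : 'M[C]_n) (m M : C) : Prop :=
  opnorm_le (A - ((M + m) / 2)%:M) (`|M - m| / 2).

(* positive semidefinite (Loewner order: X <= Y iff psd (Y - X)) *)
Definition psd (C : numClosedFieldType) n (P : 'M[C]_n) : Prop :=
  forall x : 'cV[C]_n, 0 <= (adjmx x *m P *m x) 0 0.

(* P is the modulus |X| = (X^* X)^{1/2}: the psd square root of X^* X *)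
Definition is_absmx (C : numClosedFieldType) n (X P : 'M[C]_n) : Prop :=
  psd P /\ P *m P = adjmx X *m X.

(* The diagonal embedding J : e_i |-> e_i (x) e_i is an isometry with
   J^T (A (x) B) J = A o B.  Let K = I - J J^T be the projection onto the
   complement of its range, X = A1 (x) A2 and Y = B1 (x) B2; since
   X Y = A1 B1 (x) A2 B2 and K J = 0 = J^T K, for all scalars a, b
     (A1 B1) o (A2 B2) - (A1 o A2)(B1 o B2) = J^T X Y J - (J^T X J)(J^T Y J)
                                            = J^T (X - a) K (Y - b) J.
   Taking a, b the centres of the two balls bounds the operator norm of the
   defect by |M1 - m1| |M2 - m2| / 4, and |D| <= ||D|| I for every matrix D. *)

From HB Require Import structures.
From mathcomp Require Import all_boot all_order all_algebra all_fingroup all_character.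
From mathcomp Require Import zify ring.
Import Order.TTheory GRing.Theory Num.Theory.
Set Implicit Arguments. Unset Strict Implicit. Unset Printing Implicit Defensive.
Local Open Scope ring_scope.

Section TprodIndex.
Variables m n : nat.

Lemma tprod_index_subproof (i : 'I_m) (j : 'I_n) : (i * n + j < m * n)%N.
Proof. by have := ltn_ord i; have := ltn_ord j; nia. Qed.

(* [tprod] lays its blocks out row-major: entry (i, j) sits at i * n + j. *)
Definition tprod_index (i : 'I_m) (j : 'I_n) : 'I_(m * n) :=
  Ordinal (tprod_index_subproof i j).

Lemma tprod_index_inv_subproof (k : 'I_(m * n)) : (k %/ n < m)%N /\ (k %% n < n)%N.
Proof.
have n_gt0 : (0 < n)%N by case: n k => [|n'] [k]; rewrite ?muln0.
by rewrite ltn_divLR // ltn_pmod.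
Qed.

Definition tprod_index_inv (k : 'I_(m * n)) : 'I_m * 'I_n :=
  (Ordinal (proj1 (tprod_index_inv_subproof k)),
   Ordinal (proj2 (tprod_index_inv_subproof k))).

Lemma tprod_indexK : cancel (uncurry tprod_index) tprod_index_inv.
Proof.
move=> [i j]; congr pair; apply/val_inj => /=; last by rewrite modnMDl modn_small.
by rewrite divnMDl ?divn_small ?addn0 //; have := ltn_ord j; lia.
Qed.

Lemma tprod_index_invK : cancel tprod_index_inv (uncurry tprod_index).
Proof. by move=> k; apply/val_inj => /=; rewrite -divn_eq. Qed.

Lemma eq_tprod_index (i i' : 'I_m) (j j' : 'I_n) :
  (tprod_index i j == tprod_index i' j') = (i == i') && (j == j').
Proof.
by rewrite -xpair_eqE (can_eq tprod_indexK (i, j) (i', j')).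
Qed.

Lemma big_tprod_index (R : nmodType) (F : 'I_(m * n) -> R) :
  \sum_k F k = \sum_i \sum_j F (tprod_index i j).
Proof.
rewrite (reindex (uncurry tprod_index)) /=; last first.
  by exists tprod_index_inv => k _; [exact: tprod_indexK | exact: tprod_index_invK].
by rewrite pair_big; apply: eq_bigr => -[].
Qed.

End TprodIndex.

Section TprodEntries.
Variable F : fieldType.

Lemma trowE n1 m2 n2 (a : 'rV[F]_n1) (B : 'M[F]_(m2, n2)) i j1 j2 :
  trow a B i (tprod_index j1 j2) = a 0 j1 * B i j2.
Proof.
elim: n1 a j1 => [|n1 IH] a j1; first by case: j1.
rewrite /= mxE; case: splitP => k /= k_def.
  have j1_0 : j1 = 0%N :> nat by move: k_def (ltn_ord k); nia.
  have -> : k = j2 by apply/val_inj => /=; rewrite -k_def j1_0.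
  by rewrite !mxE; congr (a _ _ * _); apply/val_inj; rewrite /= j1_0.
have j1_gt0 : (0 < j1)%N by move: k_def (ltn_ord j2); nia.
have j1_lt : (j1.-1 < n1)%N by have := ltn_ord j1; lia.
have -> : k = tprod_index (Ordinal j1_lt) j2 by apply/val_inj => /=; nia.
by rewrite IH mxE; congr (a _ _ * _); apply/val_inj => /=; lia.
Qed.

Lemma tprodE_index m1 n1 m2 n2 (A : 'M[F]_(m1, n1)) (B : 'M[F]_(m2, n2))
    i1 i2 j1 j2 :
  tprod A B (tprod_index i1 i2) (tprod_index j1 j2) = A i1 j1 * B i2 j2.
Proof.
elim: m1 A i1 => [|m1 IH] A i1; first by case: i1.
rewrite /= mxE; case: splitP => k /= k_def.
  have i1_0 : i1 = 0%N :> nat by move: k_def (ltn_ord k); nia.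
  have -> : k = i2 by apply/val_inj => /=; rewrite -k_def i1_0.
  by rewrite trowE mxE; congr (A _ _ * _); apply/val_inj; rewrite /= i1_0.
have i1_gt0 : (0 < i1)%N by move: k_def (ltn_ord i2); nia.
have i1_lt : (i1.-1 < m1)%N by have := ltn_ord i1; lia.
have -> : k = tprod_index (Ordinal i1_lt) i2 by apply/val_inj => /=; nia.
by rewrite IH mxE; congr (A _ _ * _); apply/val_inj => /=; lia.
Qed.

End TprodEntries.

Section Compression.
Variables (R : comPzRingType) (p q : nat) (V : 'M[R]_(p, q)) (W : 'M[R]_(q, p)).
Hypothesis WV : W *m V = 1%:M.

Definition compl_proj : 'M[R]_p := 1%:M - V *m W.

Lemma compl_proj_mulV : compl_proj *m V = 0.
Proof. by rewrite mulmxBl mul1mx -mulmxA WV mulmx1 subrr. Qed.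

Lemma mul_compl_proj : W *m compl_proj = 0.
Proof. by rewrite mulmxBr mulmx1 mulmxA WV mul1mx subrr. Qed.

Lemma compression_mulE (X Y : 'M[R]_p) (a b : R) :
  W *m (X *m Y) *m V - (W *m X *m V) *m (W *m Y *m V) =
  W *m (X - a%:M) *m compl_proj *m (Y - b%:M) *m V.
Proof.
have shiftl : W *m (X - a%:M) *m compl_proj = W *m X *m compl_proj.
  rewrite [W *m _]mulmxBr mulmxBl mul_mx_scalar -scalemxAl mul_compl_proj.
  by rewrite scaler0 subr0.
have shiftr Z : Z *m compl_proj *m (Y - b%:M) *m V = Z *m compl_proj *m Y *m V.
  rewrite -!mulmxA; congr (_ *m _).
  rewrite (mulmxBl Y) (mulmxBr compl_proj) mul_scalar_mx -scalemxAr compl_proj_mulV.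
  by rewrite scaler0 subr0.
rewrite !mulmxA shiftl shiftr /compl_proj.
by rewrite mulmxBr mulmx1 !mulmxBl !mulmxA.
Qed.

End Compression.

Section HermitianForm.
Variable C : numClosedFieldType.

Definition sqnorm m (v : 'cV[C]_m) : C := \sum_i `|v i 0| ^+ 2.

Lemma sqnorm_ge0 m (v : 'cV[C]_m) : 0 <= sqnorm v.
Proof. by apply: sumr_ge0 => i _; rewrite exprn_ge0. Qed.

Lemma sqnorm_eq0 m (v : 'cV[C]_m) : sqnorm v = 0 -> v = 0.
Proof.
move=> v0; apply/matrixP => i j; rewrite ord1 mxE; apply/eqP.
rewrite -normr_eq0 -sqrf_eq0 (psumr_eq0P _ v0) // => k _.
exact: exprn_ge0.
Qed.

Lemma vnormE m (v : 'cV[C]_m) : vnorm v = sqrtC (sqnorm v).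
Proof. by []. Qed.

Lemma vnorm_ge0 m (v : 'cV[C]_m) : 0 <= vnorm v.
Proof. by rewrite vnormE sqrtC_ge0 sqnorm_ge0. Qed.

Lemma ler_vnorm m1 m2 (u : 'cV[C]_m1) (v : 'cV[C]_m2) :
  sqnorm u <= sqnorm v -> vnorm u <= vnorm v.
Proof. by rewrite !vnormE ler_sqrtC // nnegrE sqnorm_ge0. Qed.

Lemma adjmxM m n p (A : 'M[C]_(m, n)) (B : 'M[C]_(n, p)) :
  adjmx (A *m B) = adjmx B *m adjmx A.
Proof.
apply/matrixP => i j; rewrite !mxE rmorph_sum; apply: eq_bigr => k _.
by rewrite !mxE rmorphM mulrC.
Qed.

Definition dotmx m (u w : 'cV[C]_m) : C := (adjmx u *m w) 0 0.

Lemma dotmxDl m (u1 u2 w : 'cV[C]_m) : dotmx (u1 + u2) w = dotmx u1 w + dotmx u2 w.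
Proof.
rewrite /dotmx !mxE -big_split; apply: eq_bigr => k _.
by rewrite !mxE rmorphD mulrDl.
Qed.

Lemma dotmxBl m (u1 u2 w : 'cV[C]_m) : dotmx (u1 - u2) w = dotmx u1 w - dotmx u2 w.
Proof.
rewrite /dotmx !mxE -sumrB; apply: eq_bigr => k _.
by rewrite !mxE rmorphB mulrBl.
Qed.

Lemma dotmxZl m c (u w : 'cV[C]_m) : dotmx (c *: u) w = c^* * dotmx u w.
Proof.
rewrite /dotmx !mxE mulr_sumr; apply: eq_bigr => k _.
by rewrite !mxE rmorphM mulrA.
Qed.

Lemma dotmxDr m (u w1 w2 : 'cV[C]_m) : dotmx u (w1 + w2) = dotmx u w1 + dotmx u w2.
Proof. by rewrite /dotmx mulmxDr mxE. Qed.

Lemma dotmxBr m (u w1 w2 : 'cV[C]_m) : dotmx u (w1 - w2) = dotmx u w1 - dotmx u w2.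
Proof. by rewrite /dotmx mulmxBr mxE [in X in _ + X]mxE. Qed.

Lemma dotmxZr m c (u w : 'cV[C]_m) : dotmx u (c *: w) = c * dotmx u w.
Proof. by rewrite /dotmx -scalemxAr mxE. Qed.

Lemma dotmxxE m (u : 'cV[C]_m) : dotmx u u = sqnorm u.
Proof.
by rewrite /dotmx mxE; apply: eq_bigr => k _; rewrite !mxE normCK mulrC.
Qed.

Lemma conj_dotmx m (u w : 'cV[C]_m) : (dotmx u w)^* = dotmx w u.
Proof.
rewrite /dotmx !mxE rmorph_sum; apply: eq_bigr => k _.
by rewrite !mxE rmorphM mulrC; congr (_ * _); exact: conjCK.
Qed.

Lemma dotmx_mull m (M : 'M[C]_m) (u w : 'cV[C]_m) :
  dotmx (M *m u) w = dotmx u (adjmx M *m w).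
Proof. by rewrite /dotmx adjmxM mulmxA. Qed.

Lemma dotmx_delta m (i : 'I_m) (w : 'cV[C]_m) : dotmx (delta_mx i 0) w = w i 0.
Proof.
rewrite /dotmx mxE (bigD1 i) //= big1 ?addr0 => [|k k_neq_i]; rewrite !mxE.
  by rewrite !eqxx rmorph1 mul1r.
by rewrite (negbTE k_neq_i) rmorph0 mul0r.
Qed.

Lemma psd_dotmx m (P : 'M[C]_m) : psd P <-> forall x, 0 <= dotmx x (P *m x).
Proof. by split=> P_psd x; [rewrite /dotmx mulmxA | rewrite -mulmxA]; apply: P_psd. Qed.

Lemma dotmx_CauchySchwarz m (u w : 'cV[C]_m) :
  `|dotmx u w| ^+ 2 <= sqnorm u * sqnorm w.
Proof.
have [u0|u_neq0] := eqVneq (sqnorm u) 0.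
  rewrite u0 mul0r (sqnorm_eq0 u0) /dotmx mxE big1 ?normr0 ?expr0n // => k _.
  by rewrite !mxE rmorph0 mul0r.
have u_gt0 : 0 < sqnorm u by rewrite lt_def u_neq0 sqnorm_ge0.
set s := sqnorm u in u_gt0 *; set b := sqnorm w; set a := dotmx u w.
have := sqnorm_ge0 (s *: w - a *: u).
rewrite -dotmxxE !(dotmxBl, dotmxBr, dotmxZl, dotmxZr) !dotmxxE -/s -/b.
rewrite -[dotmx w u]conj_dotmx -/a (geC0_conj (ltW u_gt0)) normCK.
have -> : s * (s * b - a * a^*) - a^* * (s * a - a * s) = s * (s * b - a * a^*).
  by ring.
by rewrite pmulr_rge0 // subr_ge0.
Qed.

Lemma psd_adjmx m (P : 'M[C]_m) : psd P -> adjmx P = P.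
Proof.
move=> /psd_dotmx P_psd; set Q := P - adjmx P.
have Q0 x : dotmx x (Q *m x) = 0.
  rewrite mulmxBl dotmxBr -dotmx_mull -[dotmx (P *m x) x]conj_dotmx.
  by rewrite geC0_conj ?subrr.
suff /eqP : Q = 0 by rewrite subr_eq0 => /eqP.
apply/matrixP => i j; rewrite [RHS]mxE.
have e_Q k l : dotmx (delta_mx k 0) (Q *m delta_mx l 0) = Q k l.
  by rewrite dotmx_delta -colE mxE.
have Q_diag k : Q k k = 0 by rewrite -e_Q Q0.
(* polarization along e_i + c e_j, with c = 1 and c = 'i *)
have polar c : dotmx (delta_mx i 0 + c *: delta_mx j 0)
                     (Q *m (delta_mx i 0 + c *: delta_mx j 0)) = c * Q i j + c^* * Q j i.
  rewrite mulmxDr -scalemxAr !(dotmxDl, dotmxDr, dotmxZl, dotmxZr) !e_Q !Q_diag.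
  by ring.
have sym : Q i j = Q j i.
  have /eqP := polar 'i; rewrite Q0 conjCi eq_sym mulNr subr_eq0 => /eqP.
  by move/(mulfI (neq0Ci C)).
have := polar 1; rewrite Q0 rmorph1 !mul1r -sym => /esym/eqP.
by rewrite -mulr2n mulrn_eq0 => /eqP.
Qed.

Lemma absmx_le_opnorm m (D P : 'M[C]_m) (r : C) :
  is_absmx D P -> 0 <= r -> opnorm_le D r -> psd (r%:M - P).
Proof.
move=> [P_psd PP] r_ge0 D_le; apply/psd_dotmx => x.
have a_ge0 : 0 <= dotmx x (P *m x) by move/psd_dotmx: P_psd.
have Px_le : sqnorm (P *m x) <= r ^+ 2 * sqnorm x.
  rewrite -dotmxxE dotmx_mull psd_adjmx // mulmxA PP -mulmxA -dotmx_mull dotmxxE.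
  have := D_le x; rewrite -(ler_pXn2r (n := 2)) ?nnegrE ?mulr_ge0 ?vnorm_ge0 //.
  by rewrite exprMn !vnormE !sqrtCK.
rewrite mulmxBl mul_scalar_mx dotmxBr dotmxZr dotmxxE subr_ge0.
rewrite -(ler_pXn2r (n := 2)) ?nnegrE ?mulr_ge0 ?sqnorm_ge0 //.
rewrite -(ger0_norm a_ge0); apply: le_trans (dotmx_CauchySchwarz _ _) _.
by rewrite mulrC exprMn expr2 mulrA ler_wpM2r ?sqnorm_ge0.
Qed.

End HermitianForm.

Section DiagEmbed.
Variables (C : numClosedFieldType) (n : nat).

Definition diag_embed : 'M[C]_(n * n, n) := \matrix_(k, i) (k == tprod_index i i)%:R.

Local Notation J := diag_embed.

Lemma diag_embedE i j k : J (tprod_index i j) k = ((i == k) && (j == k))%:R.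
Proof. by rewrite mxE eq_tprod_index. Qed.

Lemma mul_tr_diag_embed p (M : 'M[C]_(n * n, p)) i l :
  (J^T *m M) i l = M (tprod_index i i) l.
Proof.
rewrite mxE (bigD1 (tprod_index i i)) //= !mxE eqxx mul1r big1 ?addr0 // => k.
by rewrite !mxE => /negbTE ->; rewrite mul0r.
Qed.

Lemma mul_mx_diag_embed p (M : 'M[C]_(p, n * n)) l j :
  (M *m J) l j = M l (tprod_index j j).
Proof.
rewrite mxE (bigD1 (tprod_index j j)) //= !mxE eqxx mulr1 big1 ?addr0 // => k.
by rewrite !mxE => /negbTE ->; rewrite mulr0.
Qed.

Lemma mul_diag_embed p (M : 'M[C]_(n, p)) i j l :
  (J *m M) (tprod_index i j) l = if i == j then M i l else 0.
Proof.
rewrite mxE (bigD1 i) //= diag_embedE eqxx big1 => [|k /negbTE k_neq_i]; last first.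
  by rewrite diag_embedE eq_sym k_neq_i mul0r.
by rewrite addr0; case: eqVneq => _; rewrite (mul1r, mul0r).
Qed.

Lemma tr_diag_embedK : J^T *m J = 1%:M.
Proof.
by apply/matrixP => i j; rewrite mul_tr_diag_embed diag_embedE andbb mxE.
Qed.

Lemma hadamard_tprod (A B : 'M[C]_n) : hadamard A B = J^T *m kron A B *m J.
Proof.
by apply/matrixP => i j; rewrite mul_mx_diag_embed mul_tr_diag_embed tprodE_index mxE.
Qed.

Lemma hadamard_mul_defectE (A1 A2 B1 B2 : 'M[C]_n) (a b : C) :
  hadamard (A1 *m B1) (A2 *m B2) - hadamard A1 A2 *m hadamard B1 B2 =
  J^T *m (kron A1 A2 - a%:M) *m compl_proj J J^T *m (kron B1 B2 - b%:M) *m J.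
Proof.
rewrite !hadamard_tprod /kron !tprodE.
exact: compression_mulE tr_diag_embedK _ _ _ _.
Qed.

Lemma sqnorm_mul_tr_diag_embed (v : 'cV[C]_(n * n)) : sqnorm (J^T *m v) <= sqnorm v.
Proof.
rewrite /sqnorm big_tprod_index; apply: ler_sum => i _.
rewrite mul_tr_diag_embed (bigD1 i) //= lerDl.
by apply: sumr_ge0 => j _; rewrite exprn_ge0.
Qed.

Lemma sqnorm_compl_proj (v : 'cV[C]_(n * n)) :
  sqnorm (compl_proj J J^T *m v) <= sqnorm v.
Proof.
rewrite /sqnorm !big_tprod_index; apply: ler_sum => i _; apply: ler_sum => j _.
rewrite /compl_proj mulmxBl mul1mx -mulmxA.
rewrite [(v - _) _ _]mxE [(- (_ *m _)) _ _]mxE mul_diag_embed.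
case: eqVneq => [<-|_]; last by rewrite subr0.
by rewrite mul_tr_diag_embed subrr normr0 expr0n exprn_ge0.
Qed.

Lemma sqnorm_diag_embed (x : 'cV[C]_n) : sqnorm (J *m x) = sqnorm x.
Proof.
rewrite /sqnorm big_tprod_index; apply: eq_bigr => i _.
rewrite (bigD1 i) //= mul_diag_embed eqxx big1 ?addr0 // => j /negbTE j_neq_i.
by rewrite mul_diag_embed eq_sym j_neq_i normr0 expr0n.
Qed.

End DiagEmbed.

Theorem mainTheorem12 (C : numClosedFieldType) (n : nat)
    (A1 A2 B1 B2 : 'M[C]_n) (m1 M1 m2 M2 : C) :
  in_ball (kron A1 A2) m1 M1 ->
  in_ball (kron B1 B2) m2 M2 ->
  forall P : 'M[C]_n,
    is_absmx (hadamard (A1 *m B1) (A2 *m B2) - hadamard A1 A2 *m hadamard B1 B2) P ->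
    psd ((`|M1 - m1| * `|M2 - m2| / 4)%:M - P).
Proof.
move=> A_ball B_ball P.
rewrite (hadamard_mul_defectE _ _ _ _ ((M1 + m1) / 2) ((M2 + m2) / 2)) => absP.
have -> : `|M1 - m1| * `|M2 - m2| / 4 = (`|M1 - m1| / 2) * (`|M2 - m2| / 2) by field.
apply: absmx_le_opnorm absP _ _; first by rewrite mulr_ge0 ?divr_ge0.
move=> x; rewrite -!mulmxA.
apply: le_trans (ler_vnorm (sqnorm_mul_tr_diag_embed _)) _.
apply: le_trans (A_ball _) _.
rewrite -[_ * _ * vnorm x]mulrA ler_wpM2l ?divr_ge0 //.
apply: le_trans (ler_vnorm (sqnorm_compl_proj _)) _.
apply: le_trans (B_ball _) _.
by rewrite !vnormE sqnorm_diag_embed.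
Qed.
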